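(* Let $(\mathfrak{g},[\cdot,\cdot]_{\mathfrak{g}},\phi_{\mathfrak{g}})$ be a finite-dimensional weakly involutive Hom-Lie algebra and let $r\in\mathfrak g\otimes\mathfrak g$ be skew-symmetric with $r^\sharp$ invertible. Define $B(x,y)=\langle(r^\sharp)^{-1}(x),y\rangle$. Then [$\phi_{\mathfrak g}r^\sharp=r^\sharp\phi_{\mathfrak g}^*$ and $r$ is a solution of the classical Hom-Yang-Baxter equation $[r,r]_{\mathfrak g}=0$] if and only if for all $x,y,z\in\mathfrak g$: $B(\phi_{\mathfrak g}(x),[y,z]_{\mathfrak g})+B(\phi_{\mathfrak g}(y),[z,x]_{\mathfrak g})+B(\phi_{\mathfrak g}(z),[x,y]_{\mathfrak g})=0$ and $B(\phi_{\mathfrak g}(x),y)=B(x,\phi_{\mathfrak g}(y))$.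
   Context: A Hom-Lie algebra $(\mathfrak{g},[\cdot,\cdot]_{\mathfrak{g}},\phi_{\mathfrak{g}})$: skew-symmetric bilinear bracket and linear map with $\phi_{\mathfrak g}[x,y]=[\phi_{\mathfrak g}x,\phi_{\mathfrak g}y]$ and $[\phi_{\mathfrak g}(x),[y,z]]+[\phi_{\mathfrak g}(y),[z,x]]+[\phi_{\mathfrak g}(z),[x,y]]=0$; weakly involutive if $[\phi_{\mathfrak g}^2(x),y]=[x,y]$. For $r\in\mathfrak g\otimes\mathfrak g$, $r^\sharp:\mathfrak g^*\to\mathfrak g$ is defined by $\langle r^\sharp(a),b\rangle=\langle r,a\otimes b\rangle$. For $r=\sum_ix_i\otimes y_i$, $[r,r]_{\mathfrak g}=\sum_{i,j}\big([x_i,x_j]_{\mathfrak g}\otimes\phi_{\mathfrak g}(y_i)\otimes\phi_{\mathfrak g}(y_j)+\phi_{\mathfrak g}(x_i)\otimes[y_i,x_j]_{\mathfrak g}\otimes\phi_{\mathfrak g}(y_j)+\phi_{\mathfrak g}(x_i)\otimes\phi_{\mathfrak g}(x_j)\otimes[y_i,y_j]_{\mathfrak g}\big)$. *)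

From HB Require Import structures.
From mathcomp Require Import all_boot all_order all_algebra.
Set Implicit Arguments. Unset Strict Implicit. Unset Printing Implicit Defensive.
Import GRing.Theory.
Local Open Scope ring_scope.

(* The finite-dimensional vector space g is modelled as 'rV[K]_n (row vectors,
   with standard basis delta_mx 0 i).  Its dual g^* is also modelled as
   'rV[K]_n via the canonical pairing <a, x> = \sum_i a_i x_i. *)

Section HomLie.
Variables (K : fieldType) (n : nat).
Local Notation V := 'rV[K]_n.

Definition pairing (a x : V) : K := \sum_(i < n) a 0 i * x 0 i.

Definition ebasis (i : 'I_n) : V := delta_mx 0 i.

Definition is_hom_lie (br : V -> V -> V) (phi : V -> V) : Prop :=
  [/\ (forall (a : K) (x y z : V), br (a *: x + y) z = a *: br x z + br y z),
      (forall (a : K) (x y z : V), br x (a *: y + z) = a *: br x y + br x z),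
      (forall x y : V, br x y = - br y x),
      (forall (a : K) (x y : V), phi (a *: x + y) = a *: phi x + phi y) &
      (forall x y : V, phi (br x y) = br (phi x) (phi y))]
  /\ (forall x y z : V,
          br (phi x) (br y z) + br (phi y) (br z x) + br (phi z) (br x y) = 0).
Definition weakly_involutive (br : V -> V -> V) (phi : V -> V) : Prop :=
  forall x y : V, br (phi (phi x)) y = br x y.

(* A tensor r \in g (x) g is given by its coefficient matrix:
   r = \sum_(i,j) r i j  e_i (x) e_j. *)
Definition skew_tensor (r : 'M[K]_n) : Prop := r^T = - r.

(* r^sharp : g^* -> g, <r^sharp a, b> = <r, a (x) b> = \sum r_ij a_i b_j *)
Definition rsharp (r : 'M[K]_n) (a : V) : V := a *m r.

Definition dualmap (phi : V -> V) (a : V) : V :=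
  \row_(j < n) pairing a (phi (ebasis j)).

(* [r, r]_g \in g (x) g (x) g, evaluated on a (x) b (x) c, using the
   decomposition r = \sum_(i,j) (r_ij e_i) (x) e_j. *)
Definition hom_cybe_eval (br : V -> V -> V) (phi : V -> V) (r : 'M[K]_n)
    (a b c : V) : K :=
  \sum_(i < n) \sum_(j < n) \sum_(k < n) \sum_(l < n)
    r i j * r k l *
    ( pairing a (br (ebasis i) (ebasis k)) * pairing b (phi (ebasis j))
        * pairing c (phi (ebasis l))
    + pairing a (phi (ebasis i)) * pairing b (br (ebasis j) (ebasis k))
        * pairing c (phi (ebasis l))
    + pairing a (phi (ebasis i)) * pairing b (phi (ebasis k))
        * pairing c (br (ebasis j) (ebasis l))).

Definition hom_cybe (br : V -> V -> V) (phi : V -> V) (r : 'M[K]_n) : Prop :=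
  forall a b c : V, hom_cybe_eval br phi r a b c = 0.

Definition hformB (r : 'M[K]_n) (x y : V) : K := pairing (x *m invmx r) y.

End HomLie.

(* Since r^sharp is invertible, every x is r^sharp a for a = x (r^sharp)^-1,
   and then B(x, y) = <a, y>.  Hence phi r^sharp = r^sharp phi^* says exactly
   that phi is B-symmetric.  Expanding [r, r] in coordinates and using the
   skew-symmetry of r, with psi = r^sharp phi^*,
     [r, r](a, b, c) = <a, [psi b, psi c]> - <b, [psi a, psi c]>
                       + <c, [psi a, psi b]>.
   Under the compatibility psi a = phi (r^sharp a) = phi x, so by
   multiplicativity and B-symmetry of phi the right-hand side is the cyclic sum
   B(phi x, [y, z]) + B(phi y, [z, x]) + B(phi z, [x, y]). *)

From HB Require Import structures.
From mathcomp Require Import all_boot all_order all_algebra.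
From mathcomp Require Import ring.
Import GRing.Theory.
Local Open Scope ring_scope.
Set Implicit Arguments. Unset Strict Implicit.

Section RowExpansion.
Variables (K : fieldType) (n : nat) (W : lmodType K) (f : 'rV[K]_n -> W).
Hypothesis f_linear : forall a x y, f (a *: x + y) = a *: f x + f y.

Lemma linear_row_expand (u : 'rV[K]_n) :
  f u = \sum_(i < n) u 0 i *: f (ebasis K i).
Proof.
pose fL : {linear 'rV[K]_n -> W} :=
  HB.pack f (GRing.isLinear.Build _ _ _ _ f f_linear).
rewrite -[f u]/(fL u) {1}[u]row_sum_delta raddf_sum.
by apply: eq_bigr => i _; exact: linearZZ.
Qed.

End RowExpansion.

Lemma sum4_factor (R : comPzRingType) (m : nat) (u v F : 'I_m -> 'I_m -> R) :
  \sum_(i < m) \sum_(j < m) \sum_(k < m) \sum_(l < m) u i j * v k l * F i k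
  = \sum_(i < m) \sum_(k < m) F i k * (\sum_(j < m) u i j) * (\sum_(l < m) v k l).
Proof.
apply: eq_bigr => i _; rewrite exchange_big; apply: eq_bigr => k _ /=.
rewrite -mulrA mulr_suml mulr_sumr; apply: eq_bigr => j _.
by rewrite !mulr_sumr; apply: eq_bigr => l _; rewrite mulrC.
Qed.

Section Pairing.
Variables (K : fieldType) (n : nat).
Local Notation V := 'rV[K]_n.

Lemma pairing_linear (a : V) c (x y : V) :
  pairing a (c *: x + y) = c * pairing a x + pairing a y.
Proof.
rewrite /pairing mulr_sumr -big_split; apply: eq_bigr => i _.
by rewrite !mxE mulrDr mulrCA.
Qed.

Lemma pairingNr (a x : V) : pairing a (- x) = - pairing a x.
Proof. by rewrite /pairing -sumrN; apply: eq_bigr => i _; rewrite mxE mulrN. Qed.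

Lemma pairing_ebasis (a : V) (i : 'I_n) : pairing a (ebasis K i) = a 0 i.
Proof.
rewrite /pairing (bigD1 i) //= big1 => [|j ji]; rewrite /ebasis mxE eqxx /=.
  by rewrite eqxx mulr1 addr0.
by rewrite (negbTE ji) mulr0.
Qed.

Lemma skew_sum_mul (r : 'M[K]_n) (w : V) (i : 'I_n) :
  skew_tensor r -> \sum_(j < n) r i j * w 0 j = - (w *m r) 0 i.
Proof.
rewrite /skew_tensor => r_skew; rewrite mxE -sumrN; apply: eq_bigr => j _.
have := congr1 (fun M : 'M[K]_n => M i j) r_skew; rewrite !mxE => ->.
by rewrite mulrN opprK mulrC.
Qed.

End Pairing.

Section HomLieForms.
Variables (K : fieldType) (n : nat).
Local Notation V := 'rV[K]_n.
Local Notation e := (ebasis K).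
Variables (br : V -> V -> V) (phi : V -> V) (r : 'M[K]_n).
Local Notation psi a := (rsharp r (dualmap phi a)).

Hypothesis br_linearl : forall c x y z, br (c *: x + y) z = c *: br x z + br y z.
Hypothesis br_linearr : forall c x y z, br x (c *: y + z) = c *: br x y + br x z.
Hypothesis br_skew : forall x y, br x y = - br y x.
Hypothesis phi_linear : forall c x y, phi (c *: x + y) = c *: phi x + phi y.
Hypothesis phi_br : forall x y, phi (br x y) = br (phi x) (phi y).
Hypothesis r_skew : skew_tensor r.
Hypothesis r_unit : r \in unitmx.

Lemma pairing_dualmap (a y : V) : pairing (dualmap phi a) y = pairing a (phi y).
Proof.
pose f : V -> K^o := fun y => pairing a (phi y).
have lin : forall c x z, f (c *: x + z) = c *: f x + f z.
  by move=> c x z; rewrite /f phi_linear pairing_linear.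
rewrite -[pairing a (phi y)]/(f y) (linear_row_expand lin) /pairing.
by apply: eq_bigr => i _; rewrite mxE mulrC.
Qed.

Lemma phi_rsharp_iff_hformB_sym :
  (forall a, phi (rsharp r a) = rsharp r (dualmap phi a)) <->
  (forall x y, hformB r (phi x) y = hformB r x (phi y)).
Proof.
rewrite /rsharp /hformB; split=> [compat x y | sym a].
  by rewrite -{1}[x](mulmxKV r_unit) compat (mulmxK r_unit) pairing_dualmap.
apply: (can_inj (mulmxKV r_unit)); rewrite (mulmxK r_unit); apply/rowP => j.
by rewrite -pairing_ebasis sym (mulmxK r_unit) mxE.
Qed.

Lemma pairing_br_expand (a u v : V) :
  pairing a (br u v) =
  \sum_(i < n) \sum_(k < n) pairing a (br (e i) (e k)) * u 0 i * v 0 k.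
Proof.
pose fl w : V -> K^o := fun x => pairing a (br x w).
pose fr w : V -> K^o := fun x => pairing a (br w x).
have linl w c x y : fl w (c *: x + y) = c *: fl w x + fl w y.
  by rewrite /fl br_linearl pairing_linear.
have linr w c x y : fr w (c *: x + y) = c *: fr w x + fr w y.
  by rewrite /fr br_linearr pairing_linear.
rewrite -[LHS]/(fl v u) (linear_row_expand (linl v)); apply: eq_bigr => i _.
rewrite -[fl v _]/(fr (e i) v) (linear_row_expand (linr (e i))).
rewrite scaler_sumr; apply: eq_bigr => k _.
by rewrite -[LHS]/(u 0 i * (v 0 k * pairing a (br (e i) (e k)))); ring.
Qed.

Lemma hom_cybe_evalE (a b c : V) :
  hom_cybe_eval br phi r a b c =
    pairing a (br (psi b) (psi c)) - pairing b (br (psi a) (psi c))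
    + pairing c (br (psi a) (psi b)).
Proof.
pose G (w : V) j := pairing w (phi (e j)).
pose P (w : V) i k := pairing w (br (e i) (e k)).
have psiE w i : \sum_(j < n) r j i * G w j = (psi w) 0 i.
  by rewrite /rsharp mxE; apply: eq_bigr => j _; rewrite mxE mulrC.
have psiNE w i : \sum_(j < n) r i j * G w j = - (psi w) 0 i.
  by rewrite /rsharp -skew_sum_mul //; apply: eq_bigr => j _; rewrite mxE.
have term1 : \sum_(i < n) \sum_(j < n) \sum_(k < n) \sum_(l < n)
    r i j * r k l * (P a i k * G b j * G c l) = pairing a (br (psi b) (psi c)).
  transitivity (\sum_(i < n) \sum_(j < n) \sum_(k < n) \sum_(l < n)
    (r i j * G b j) * (r k l * G c l) * P a i k).
    by do 4!(apply: eq_bigr => ? _); ring.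
  rewrite sum4_factor pairing_br_expand; do 2!(apply: eq_bigr => ? _).
  by rewrite !psiNE -mulrA mulrNN mulrA.
have term2 : \sum_(i < n) \sum_(j < n) \sum_(k < n) \sum_(l < n)
    r i j * r k l * (G a i * P b j k * G c l) = - pairing b (br (psi a) (psi c)).
  transitivity (\sum_(j < n) \sum_(i < n) \sum_(k < n) \sum_(l < n)
    (r i j * G a i) * (r k l * G c l) * P b j k).
    by rewrite exchange_big; do 4!(apply: eq_bigr => ? _); ring.
  rewrite sum4_factor pairing_br_expand -sumrN; apply: eq_bigr => j _.
  by rewrite -sumrN; apply: eq_bigr => k _; rewrite psiE psiNE mulrN.
have term3 : \sum_(i < n) \sum_(j < n) \sum_(k < n) \sum_(l < n)
    r i j * r k l * (G a i * G b k * P c j l) = pairing c (br (psi a) (psi b)).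
  transitivity (\sum_(j < n) \sum_(i < n) \sum_(l < n) \sum_(k < n)
    (r i j * G a i) * (r k l * G b k) * P c j l).
    rewrite exchange_big; do 2!(apply: eq_bigr => ? _).
    by rewrite exchange_big; do 2!(apply: eq_bigr => ? _); ring.
  by rewrite sum4_factor pairing_br_expand; do 2!(apply: eq_bigr => ? _); rewrite !psiE.
rewrite -term1 -term2 -term3 /hom_cybe_eval -!big_split; apply: eq_bigr => i _.
rewrite -!big_split; apply: eq_bigr => j _.
rewrite -!big_split; apply: eq_bigr => k _.
by rewrite -!big_split; apply: eq_bigr => l _; rewrite !mulrDr.
Qed.

Lemma hom_cybe_eval_hformB (x y z : V) :
  (forall a, phi (rsharp r a) = rsharp r (dualmap phi a)) ->
  hom_cybe_eval br phi r (x *m invmx r) (y *m invmx r) (z *m invmx r) =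
  hformB r (phi x) (br y z) + hformB r (phi y) (br z x)
    + hformB r (phi z) (br x y).
Proof.
move=> compat; have sym := phi_rsharp_iff_hformB_sym.1 compat.
rewrite hom_cybe_evalE -!compat /rsharp !(mulmxKV r_unit) !sym !phi_br.
by rewrite (br_skew (phi z)) /hformB pairingNr.
Qed.

End HomLieForms.

Theorem proposition4p11 (K : fieldType) (n : nat)
    (br : 'rV[K]_n -> 'rV[K]_n -> 'rV[K]_n) (phi : 'rV[K]_n -> 'rV[K]_n)
    (r : 'M[K]_n) :
  [pchar K] =i pred0 ->
  is_hom_lie br phi ->
  weakly_involutive br phi ->
  skew_tensor r ->
  r \in unitmx ->
  ((forall a : 'rV[K]_n, phi (rsharp r a) = rsharp r (dualmap phi a))
     /\ hom_cybe br phi r)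
  <->
  ((forall x y z : 'rV[K]_n,
      hformB r (phi x) (br y z) + hformB r (phi y) (br z x)
        + hformB r (phi z) (br x y) = 0)
   /\ (forall x y : 'rV[K]_n, hformB r (phi x) y = hformB r x (phi y))).
Proof.
move=> _ [[br_linl br_linr br_skew phi_lin phi_br] _] _ r_skew r_unit.
have compat_sym := phi_rsharp_iff_hformB_sym phi_lin r_unit.
have cybe_hformB := hom_cybe_eval_hformB br_linl br_linr br_skew phi_lin
                      phi_br r_skew r_unit.
split=> [[compat cybe] | [cyclic sym]].
  split=> [x y z|]; last exact/compat_sym.
  by rewrite -cybe_hformB //; apply: cybe.
have compat := compat_sym.2 sym; split=> // a b c.
rewrite -[a](mulmxK r_unit) -[b](mulmxK r_unit) -[c](mulmxK r_unit).
by rewrite cybe_hformB // cyclic.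
Qed.
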